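(* Let $(X_t)_{t\geq0}$ be the cellular automaton defined below, with initial law such that the columns $(X_0(i,\cdot))_{i\in\mathbb N}$ are i.i.d. with common law $\mu$, a probability law on $\{0,1\}^{\mathbb N}$. Then for each $n\in\mathbb N$, the columns $(X_{2n}(i,\cdot))_{i\in\mathbb N}$ are i.i.d. with common law ${\cal F}^n(\mu)$. The same holds with $(X_t)$ replaced by $(\widehat X_t)$ and ${\cal F}$ replaced by $\widehat{\cal F}$.
   Context: Here $\mathbb N=\{0,1,2,\dots\}$, and $X_t(i,\cdot):=(X_t(i,j))_{j\in\mathbb N}$. **Cellular automata.** Given a random $X_0\in\{0,1\}^{\mathbb N^2}$, for $t>0$ and $(i,j)\in\mathbb N^2$ set: - $X_t(i,j)=X_{t-1}(2i,j)\wedge X_{t-1}(2i+1,j)$ if $t$ is even; - $X_t(i,j)=X_{t-1}(i,j)\vee X_{t-1}(i,j+1)$ if $t$ is odd. $\widehat X_t$ is defined likewise from $\widehat X_0$ (with the same initial column assumption) but with the two rules interchanged: the $\wedge$-rule at odd $t$ and the $\vee$-rule at even $t$. **Column maps.** Let $S=\{0,1\}^{\mathbb N}$ and ${\cal M}$ the set of probability laws on $S$. Define $\Phi_{\rm A}(y,z)(k)=y(k)\wedge z(k)$ and $\Phi_{\rm b}(y)(k)=y(k)\vee y(k+1)$. For $\mu\in{\cal M}$, ${\cal F}_{\rm A}(\mu)$ is the law of $\Phi_{\rm A}(Y,Z)$ and ${\cal F}_{\rm b}(\mu)$ is the law of $\Phi_{\rm b}(Y)$, where $Y,Z$ are independent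 with law $\mu$. Set ${\cal F}:={\cal F}_{\rm A}\circ{\cal F}_{\rm b}$ and $\widehat{\cal F}:={\cal F}_{\rm b}\circ{\cal F}_{\rm A}$; ${\cal F}^n$ is the $n$-th iterate. *)

From HB Require Import structures.
From mathcomp Require Import all_boot all_order all_algebra.
From mathcomp Require Import finmap.
From mathcomp Require Import all_classical all_reals all_analysis.
Set Implicit Arguments. Unset Strict Implicit. Unset Printing Implicit Defensive.
Import Order.TTheory GRing.Theory Num.Theory.
Local Open Scope classical_set_scope.
Local Open Scope ring_scope.

Definition coord_sets : set (set (nat -> bool)) :=
  [set A | exists (k : nat) (B : set bool), A = (fun y : nat -> bool => y k) @^-1` B].

Definition S : measurableType _ := g_sigma_algebraType coord_sets.

Lemma bool_measurable_fun d (T : measurableType d) (g : T -> bool) :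
  measurable [set t | g t] -> measurable_fun setT g.
Proof.
move=> mg _ B _; rewrite setTI.
have -> : g @^-1` B = ((if pselect (B true) then [set t | g t] else set0) `|`
                       (if pselect (B false) then ~` [set t | g t] else set0)).
  apply/seteqP; split => t; rewrite /preimage /setU /setC /=;
    destruct (pselect (B true)) as [Ht|Ht]; destruct (pselect (B false)) as [Hf|Hf];
    case E: (g t); rewrite /= ?E; intuition (try discriminate); (try by left); (try by right); exfalso; auto.
destruct (pselect (B true)); destruct (pselect (B false)); simpl;
  have mC := measurableC mg; first [exact: measurableU _ _ mg mC | exact: measurableU _ _ mg measurable0 | exact: measurableU _ _ measurable0 mC | exact: measurableU _ _ measurable0 measurable0].
Qed.

Lemma measurable_coord (k : nat) : measurable_fun setT (fun y : S => y k).
Proof.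
move=> _ B _; rewrite setTI; apply: sub_sigma_algebra; by exists k, B.
Qed.

Lemma measurable_into_S d (T : measurableType d) (f : T -> S) :
  (forall k, measurable_fun setT (fun t => f t k)) -> measurable_fun setT f.
Proof.
move=> hf; apply: (@measurability _ _ _ _ setT f coord_sets) => //.
move=> _ [_ [k [B ->]] <-]; rewrite setTI -comp_preimage.
by have := hf k measurableT B I; rewrite setTI.
Qed.

Definition PhiA (p : S * S) : S := fun k => p.1 k && p.2 k.
Definition Phib (y : S) : S := fun k => y k || y k.+1.

Lemma measurable_PhiA : measurable_fun setT PhiA.
Proof.
apply: measurable_into_S => k; apply: bool_measurable_fun.
rewrite /PhiA /=.
have -> : [set t : S * S | t.1 k && t.2 k] =
  ((fun p : S * S => p.1 k) @^-1` [set true]) `&` ((fun p : S * S => p.2 k) @^-1` [set true]).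
  by apply/seteqP; split => t /=; [move/andP=> [-> ->]|move=> [-> ->]].
have h1 : measurable_fun setT (fun p : S * S => p.1 k) :=
  measurableT_comp (measurable_coord k) measurable_fst.
have h2 : measurable_fun setT (fun p : S * S => p.2 k) :=
  measurableT_comp (measurable_coord k) measurable_snd.
apply: measurableI.
- by rewrite -[X in measurable X]setTI; apply: h1.
- by rewrite -[X in measurable X]setTI; apply: h2.
Qed.

Lemma measurable_Phib : measurable_fun setT Phib.
Proof.
apply: measurable_into_S => k; apply: bool_measurable_fun.
have -> : [set t : S | Phib t k] =
  ((fun y : S => y k) @^-1` [set true]) `|` ((fun y : S => y k.+1) @^-1` [set true]).
  by apply/seteqP; split => t /=; [move=> /orP [a|a]; [left|right] | move=> [a|a]; apply/orP; [left|right]].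
apply: measurableU.
- by rewrite -[X in measurable X]setTI; apply: measurable_coord.
- by rewrite -[X in measurable X]setTI; apply: measurable_coord.
Qed.

HB.instance Definition _ := isMeasurableFun.Build _ _ _ _ PhiA measurable_PhiA.
HB.instance Definition _ := isMeasurableFun.Build _ _ _ _ Phib measurable_Phib.

Section laws.
Variable R : realType.
Local Open Scope ereal_scope.

Definition FA (mu : probability S R) : probability S R :=
  distribution (mu \x mu) PhiA.
Definition Fb (mu : probability S R) : probability S R :=
  distribution mu Phib.

Definition F (mu : probability S R) : probability S R := FA (Fb mu).
Definition Fhat (mu : probability S R) : probability S R := Fb (FA mu).
End laws.

(* X i j = X(i,j); the column X(i,.) is X i : S.                            *)
Definition Grid := nat -> nat -> bool.

Definition and_rule (X : Grid) : Grid := fun i j => X (2 * i)%N j && X (2 * i + 1)%N j.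
Definition or_rule (X : Grid) : Grid := fun i j => X i j || X i j.+1.

Fixpoint CA (X0 : Grid) (t : nat) : Grid :=
  match t with
  | 0 => X0
  | t'.+1 => if odd t'.+1 then or_rule (CA X0 t') else and_rule (CA X0 t')
  end.

Fixpoint CAhat (X0 : Grid) (t : nat) : Grid :=
  match t with
  | 0 => X0
  | t'.+1 => if odd t'.+1 then and_rule (CAhat X0 t') else or_rule (CAhat X0 t')
  end.

Section iid.
Local Open Scope ereal_scope.
Context d (Omega : measurableType d) (R : realType) (P : probability Omega R).

Definition random_columns (Y : nat -> Omega -> S) : Prop :=
  forall i, measurable_fun setT (Y i).

Definition mutually_independent (Y : nat -> Omega -> S) : Prop :=
  forall (I : {fset nat}) (A : nat -> set S),
    (forall i, i \in I -> measurable (A i)) ->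
    P (\bigcap_(i in [set` I]) (Y i @^-1` A i)) = \prod_(i <- I) P (Y i @^-1` A i).

Definition identically_distributed (Y : nat -> Omega -> S) (mu : probability S R) : Prop :=
  forall i (A : set S), measurable A -> P (Y i @^-1` A) = mu A.

Definition iid_with_law (Y : nat -> Omega -> S) (mu : probability S R) : Prop :=
  [/\ random_columns Y, mutually_independent Y & identically_distributed Y mu].
End iid.

From HB Require Import structures.
From mathcomp Require Import all_boot all_order all_algebra.
From mathcomp Require Import finmap.
From mathcomp Require Import all_classical all_reals all_analysis.

(* By induction on n it suffices that each rule maps i.i.d. columns to i.i.d.
   columns with the expected law.  The \/-rule acts column by column through the
   measurable map Phi_b, so this is immediate.  The /\-rule applies Phi_A to the
   disjoint pairs (X(2i,.), X(2i+1,.)); these pairs are i.i.d. with law mu \x mu.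
   The product formula for them is checked directly on products of rectangles and
   then extended to arbitrary measurable subsets of S x S one pair at a time,
   since two finite measures agreeing on a pi-system that generates the
   sigma-algebra agree everywhere. *)

Set Implicit Arguments.
Unset Strict Implicit.
Unset Printing Implicit Defensive.

Import Order.TTheory GRing.Theory Num.Theory.

Local Open Scope classical_set_scope.

Lemma bigcap_fsetD1 {I : choiceType} {T : Type} {J : {fset I}} {k : I} (F : I -> set T) :
  k \in J -> \bigcap_(i in [set` J]) F i = F k `&` \bigcap_(i in [set` (J `\ k)%fset]) F i.
Proof. by move=> kJ; rewrite set_fsetD1; exact: bigcap_setD1. Qed.

Section product_rule.
Local Open Scope ereal_scope.
Context d (Omega : measurableType d) (R : realType) (P : probability Omega R).
Context dT (T : measurableType dT).

Definition product_rule (G : set (set T)) (Z : nat -> Omega -> T) (m : probability T R) :=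
  forall (I : {fset nat}) (A : nat -> set T), (forall i, i \in I -> G (A i)) ->
  P (\bigcap_(i in [set` I]) (Z i @^-1` A i)) = \prod_(i <- I) m (A i).

Lemma product_rule_uniq (G : set (set T)) (Z : nat -> Omega -> T) (m : probability T R) :
  product_rule G Z m -> forall (s : seq nat) (A : nat -> set T), uniq s ->
  (forall i, i \in s -> G (A i)) ->
  P (\bigcap_(i in [set` s]) (Z i @^-1` A i)) = \prod_(i <- s) m (A i).
Proof.
move=> hZ s A us GA.
have -> : [set` s] = [set` seq_fset tt s].
  by apply: eq_set => i; rewrite seq_fsetE.
have hs : perm_eq (seq_fset tt s) s by rewrite -{2}(undup_id us) seq_fset_perm.
rewrite -(perm_big _ hs).
by apply: hZ => i; rewrite seq_fsetE; exact: GA.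
Qed.

Section generator.
Variable G : set (set T).
Hypotheses (mG : measurable = <<s G >>) (setIG : setI_closed G) (GT : G setT).

Lemma preimage_setI_from_generator (m : probability T R) (Z : Omega -> T) (E : set Omega) :
  measurable_fun setT Z -> measurable E ->
  (forall D, G D -> P (Z @^-1` D `&` E) = m D * P E) ->
  forall D, measurable D -> P (Z @^-1` D `&` E) = m D * P E.
Proof.
move=> mZ mE hG D mD.
pose r := NngNum (fine_ge0 (measure_ge0 P E)).
(* the measure instance of [pushforward] depends on [mZ], hence the explicit name *)
pose m1 := measure_function_pushforward__canonical__measure_function_Measure (mrestr P mE) mZ.
pose m2 := mscale r m.
have m2E A : m2 A = m A * P E by rewrite /m2 /mscale /r /= fineK ?fin_num_measure // muleC.
rewrite -m2E.
apply: (measure_unique G (fun=> setT) mG setIG (fun=> GT) _ m1 m2) => //.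
- by rewrite bigcup_const.
- by move=> A GA; rewrite -[RHS]/(m2 A) m2E; exact: hG.
- move=> _; apply: (le_lt_trans (probability_le1 P _) (ltry _)).
  by rewrite preimage_setT setTI.
Qed.

Lemma product_rule_from_generator (Z : nat -> Omega -> T) (m : probability T R) :
  (forall i, measurable_fun setT (Z i)) -> product_rule G Z m -> product_rule measurable Z m.
Proof.
move=> mZ hG.
have GW D : G D -> measurable D by rewrite mG; exact: sub_sigma_algebra.
(* [J] lists the coordinates at which [A] need not lie in [G]. *)
suff free (J : seq nat) (I : {fset nat}) (A : nat -> set T) :
    (forall i, i \in I -> measurable (A i)) ->
    (forall i, i \in I -> i \notin J -> G (A i)) ->
    P (\bigcap_(i in [set` I]) (Z i @^-1` A i)) = \prod_(i <- I) m (A i).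
  by move=> I A mA; apply: (free I) => // i iI; rewrite iI.
elim: J I A => [|j J IH] I A mA GA; first by apply: hG => i iI; exact: GA.
have [jI|jNI] := boolP (j \in I); last first.
  apply: IH => // i iI iJ; apply: GA; rewrite // inE negb_or iJ andbT.
  by apply: contraNneq jNI => <-.
set E := \bigcap_(i in [set` (I `\ j)%fset]) (Z i @^-1` A i).
have PE : P E = \prod_(i <- (I `\ j)%fset) m (A i).
  apply: IH => i; rewrite in_fsetD1 => /andP [ij iI]; first exact: mA.
  by move=> iJ; apply: GA; rewrite // inE negb_or ij.
rewrite (bigcap_fsetD1 _ jI) (big_fsetD1 j jI) /= -/E -PE.
apply: preimage_setI_from_generator => //; last exact: mA.
  apply: fin_bigcap_measurable; first exact: finite_fset.
  move=> i; rewrite /= in_fsetD1 => /andP [_ iI].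
  by rewrite -[X in measurable X]setTI; apply: mZ => //; exact: mA.
move=> D GD; pose A' i := if i == j then D else A i.
have A'E i : i \in (I `\ j)%fset -> A' i = A i.
  by rewrite in_fsetD1 /A' => /andP [/negbTE ->].
have E' : \bigcap_(i in [set` (I `\ j)%fset]) (Z i @^-1` A' i) = E.
  by apply: eq_bigcapr => i /A'E ->.
have c' : \prod_(i <- (I `\ j)%fset) m (A' i) = P E.
  by rewrite PE big_seq [RHS]big_seq; apply: eq_bigr => i /A'E ->.
have := IH I A'; rewrite (bigcap_fsetD1 _ jI) (big_fsetD1 j jI) /= E' c' /A' eqxx; apply.
- by move=> i iI; case: eqP => _; [exact: GW | exact: mA].
- move=> i iI iJ; case: eqP => [//|/eqP ij].
  by apply: GA; rewrite // inE negb_or ij.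
Qed.
End generator.
End product_rule.

Lemma product_rule_comp d (Omega : measurableType d) (R : realType) (P : probability Omega R)
    dT (T : measurableType dT) dT' (T' : measurableType dT')
    (Z : nat -> Omega -> T) (m : probability T R) (f : {mfun T >-> T'}) :
  product_rule P measurable Z m ->
  product_rule P measurable (fun i w => f (Z i w)) (distribution m f).
Proof. by move=> hZ I A mA; apply: hZ => i iI; exact/measurable_funPTI/mA. Qed.

Section column_pairs.
Local Open Scope ereal_scope.
Context d (Omega : measurableType d) (R : realType) (P : probability Omega R).
Context dT (T : measurableType dT).

Definition column_pairs (Y : nat -> Omega -> T) (i : nat) (w : Omega) : T * T :=
  (Y i.*2 w, Y i.*2.+1 w).

Definition rectangles : set (set (T * T)) :=
  [set A `*` B | A in measurable & B in measurable].

Lemma uniq_interleave (I : {fset nat}) :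
  uniq ([seq i.*2 | i <- I] ++ [seq i.*2.+1 | i <- I]).
Proof.
rewrite cat_uniq !map_inj_uniq ?fset_uniq ?andbT /=; first last.
- exact: double_inj.
- by move=> i j /eqP; rewrite eqSS => /eqP /double_inj.
apply/hasPn => _ /mapP [i _ ->]; apply/mapP => -[j _ /(congr1 odd)].
by rewrite /= !odd_double.
Qed.

Lemma product_rule_column_pairs_rectangles (Y : nat -> Omega -> T) (m : probability T R) :
  product_rule P measurable Y m -> product_rule P rectangles (column_pairs Y) (m \x m).
Proof.
move=> hY I C rC.
pose sides i (AB : set T * set T) :=
  [/\ measurable AB.1, measurable AB.2 & C i = AB.1 `*` AB.2].
have [AB hAB] : {AB & forall i, i \in I -> sides i (AB i)}.
  apply: (choice (P := fun i AB => i \in I -> sides i AB)) => i.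
  have [iI|_] := boolP (i \in I); last by exists (setT, setT).
  by have [A mA [B mB CAB]] := rC i iI; exists (A, B).
(* coordinate [j] of [Y] is constrained by a side of the rectangle of pair [j./2] *)
pose D j := if odd j then (AB j./2).2 else (AB j./2).1.
have Deven i : D i.*2 = (AB i).1 by rewrite /D odd_double doubleK.
have Dodd i : D i.*2.+1 = (AB i).2 by rewrite /D /= odd_double /= uphalf_double.
set s := [seq i.*2 | i <- I] ++ [seq i.*2.+1 | i <- I].
have -> : \bigcap_(i in [set` I]) (column_pairs Y i @^-1` C i) =
          \bigcap_(j in [set` s]) (Y j @^-1` D j).
  apply/seteqP; split => w H.
  - move=> j /=; rewrite mem_cat => /orP [] /mapP [i iI ->];
      case: (hAB i iI) (H i iI) => _ _ -> [].
    + by rewrite Deven.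
    + by rewrite Dodd.
  - move=> i /= iI; case: (hAB i iI) => _ _ ->; split => /=.
    + by rewrite -Deven; apply: H; rewrite /= mem_cat map_f.
    + by rewrite -Dodd; apply: H; rewrite /= mem_cat map_f ?orbT.
rewrite (product_rule_uniq hY (uniq_interleave I)); last first.
  move=> j; rewrite mem_cat => /orP [] /mapP [i iI ->];
    by rewrite ?Deven ?Dodd; case: (hAB i iI).
rewrite big_cat !big_map.
transitivity (\prod_(i <- I) (m (D i.*2) * m (D i.*2.+1))); first by rewrite big_split.
apply: eq_big_seq => i iI.
by case: (hAB i iI) => mA mB ->; rewrite Deven Dodd; exact/esym/product_measure1E.
Qed.

Lemma product_rule_column_pairs (Y : nat -> Omega -> T) (m : probability T R) :
  (forall i, measurable_fun setT (Y i)) -> product_rule P measurable Y m ->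
  product_rule P measurable (column_pairs Y) (m \x m).
Proof.
move=> mY hY; apply: (@product_rule_from_generator _ _ _ _ _ _ rectangles).
- exact: measurable_prod_measurableType.
- move=> _ _ [A1 mA1 [B1 mB1 <-]] [A2 mA2 [B2 mB2 <-]]; rewrite -setXI.
  by exists (A1 `&` A2); [exact: measurableI | exists (B1 `&` B2); [exact: measurableI |]].
- by exists setT => //; exists setT => //; rewrite setXTT.
- by move=> i; exact: measurable_fun_pair.
- exact: product_rule_column_pairs_rectangles.
Qed.

End column_pairs.

Section iid_columns.
Local Open Scope ereal_scope.
Context d (Omega : measurableType d) (R : realType) (P : probability Omega R).

Lemma iid_with_lawE (Y : nat -> Omega -> S) (nu : probability S R) :
  iid_with_law P Y nu <-> random_columns Y /\ product_rule P measurable Y nu.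
Proof.
split=> [[mY indY lawY] | [mY hY]].
  by split=> // I A mA; rewrite indY //; apply: eq_big_seq => i /mA /lawY ->.
have lawY i A : measurable A -> P (Y i @^-1` A) = nu A.
  move=> mA; have := hY [fset i]%fset (fun=> A).
  by rewrite set_fset1 bigcap_set1 big_seq_fset1; apply=> j _; exact: mA.
by split=> // I A mA; rewrite hY //; apply: eq_big_seq => i /mA /lawY ->.
Qed.

Lemma iid_Phib (Y : nat -> Omega -> S) (nu : probability S R) :
  iid_with_law P Y nu -> iid_with_law P (fun i w => Phib (Y i w)) (Fb nu).
Proof.
move=> /iid_with_lawE [mY hY]; apply/iid_with_lawE; split.
  by move=> i; apply: measurableT_comp => //; exact: measurable_Phib.
exact: (product_rule_comp Phib hY).
Qed.

Lemma iid_PhiA (Y : nat -> Omega -> S) (nu : probability S R) :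
  iid_with_law P Y nu ->
  iid_with_law P (fun i w => PhiA (Y (2 * i)%N w, Y (2 * i + 1)%N w)) (FA nu).
Proof.
move=> /iid_with_lawE [mY hY].
have -> : (fun i w => PhiA (Y (2 * i)%N w, Y (2 * i + 1)%N w)) =
          (fun i w => PhiA (column_pairs Y i w)).
  by apply/funext => i; rewrite mul2n addn1.
apply/iid_with_lawE; split.
  by move=> i; apply: measurableT_comp; [exact: measurable_PhiA | exact: measurable_fun_pair].
exact: (product_rule_comp PhiA (product_rule_column_pairs mY hY)).
Qed.

End iid_columns.

Lemma CA_double_step X n : CA X (2 * n.+1) = and_rule (or_rule (CA X (2 * n))).
Proof. by rewrite mulnS /= mul2n odd_double. Qed.

Lemma CAhat_double_step X n : CAhat X (2 * n.+1) = or_rule (and_rule (CAhat X (2 * n))).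
Proof. by rewrite mulnS /= mul2n odd_double. Qed.

Theorem lemma16 (R : realType) (d : measure_display) (Omega : measurableType d)
    (P : probability Omega R) (X0 : Omega -> Grid) (mu : probability S R) :
  iid_with_law P (fun i w => X0 w i) mu ->
  forall n : nat,
    iid_with_law P (fun i w => CA (X0 w) (2 * n)%N i) (iter n (@F R) mu) /\
    iid_with_law P (fun i w => CAhat (X0 w) (2 * n)%N i) (iter n (@Fhat R) mu).
Proof.
move=> h0; elim=> [|n [IH IHhat]]; first by split.
under eq_fun => i do under eq_fun => w do rewrite CA_double_step.
under [X in _ /\ iid_with_law _ X _]eq_fun => i do
  under eq_fun => w do rewrite CAhat_double_step.
split; [exact: iid_PhiA (iid_Phib IH) | exact: iid_Phib (iid_PhiA IHhat)].
Qed.
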